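(* Let the spot price $\pi$ have CDF $F_{\pi}$ and monotonically decreasing density $f_{\pi}$ on $[\underline{\pi},\bar{\pi}]$ with $0\le\underline{\pi}<\bar{\pi}$, and let $t_k,t_e,t_s,t_r>0$ with $\frac{t_e}{2}<t_s<t_e$. Consider the problem (P3): minimize over $(q,p)$ $$\Phi_3(p,q)=q\,t_e\bar{\pi}+\frac{(1-q)t_e}{1-\frac{t_r}{t_k}(1-F_{\pi}(p))}\cdot\frac{\int_{\underline{\pi}}^{p}x f_{\pi}(x)\,dx}{F_{\pi}(p)}$$ subject to $q t_e\le t_s$, $\;\underline{\pi}\le p\le\bar{\pi}$, $\;0\le q\le 1$, $$\frac{(1-q)t_e}{1-\frac{t_r}{t_k}(1-F_{\pi}(p))}\cdot\frac{1}{F_{\pi}(p)}\le t_s,\qquad t_r<\frac{t_k}{2(1-F_{\pi}(p))}.$$ If $(q^*,p^* )$ is an optimal solution of (P3), then $F_{\pi}(p^* )\ge\frac12$.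
   Context: Model (persistent request): a user runs a fraction $q$ of a job (execution time $t_e$, deadline $t_s$) on an on-demand instance at price $\bar{\pi}$ and the rest on a spot instance with bid $p$, where an interrupted job resumes when the bid again exceeds the spot price, incurring a recovery time $t_r$ per resumption; spot prices in slots of length $t_k$ are i.i.d. with CDF $F_{\pi}$ and monotonically decreasing density $f_{\pi}$ on $[\underline{\pi},\bar{\pi}]$. *)

From Stdlib Require Import Reals.
From Coquelicot Require Import Coquelicot.
Open Scope R_scope.

Definition cdf (f : R -> R) (lo p : R) : R := RInt f lo p.

Definition partial_mean (f : R -> R) (lo p : R) : R := RInt (fun x => x * f x) lo p.

Definition Phi3 (f : R -> R) (lo hi tk te tr : R) (p q : R) : R :=
  q * te * hi
  + ((1 - q) * te / (1 - tr / tk * (1 - cdf f lo p)))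
    * (partial_mean f lo p / cdf f lo p).

(* Feasible set of (P3).  The condition F(p) > 0 is the implicit domain
   condition making the divisions by F(p) meaningful. *)
Definition feasible3 (f : R -> R) (lo hi tk te ts tr : R) (q p : R) : Prop :=
  q * te <= ts /\
  lo <= p <= hi /\
  0 <= q <= 1 /\
  0 < cdf f lo p /\
  (1 - q) * te / (1 - tr / tk * (1 - cdf f lo p)) * (1 / cdf f lo p) <= ts /\
  (* t_r < t_k / (2(1-F(p))), cleared of the denominator so that it is
     vacuous (+oo bound) when F(p) = 1, as in the paper *)
  2 * tr * (1 - cdf f lo p) < tk.

Definition optimal3 (f : R -> R) (lo hi tk te ts tr : R) (q p : R) : Prop :=
  feasible3 f lo hi tk te ts tr q p /\
  forall q' p', feasible3 f lo hi tk te ts tr q' p' ->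
    Phi3 f lo hi tk te tr p q <= Phi3 f lo hi tk te tr p' q'.

From Stdlib Require Import Reals Lra Lia.
From Coquelicot Require Import Coquelicot.
Open Scope R_scope.

(* Bidding the maximal price hi is never interrupted, so (q, p) = (1 - ts/te, hi)
   runs the spot part for the whole deadline ts, without recovery overhead, at the
   mean price mu; its cost is te hi - ts (hi - mu).  For a feasible (q, p) with
   F(p) < 1 let D = 1 - tr/tk (1 - F(p)), which lies in (0, 1), and let s <= ts be
   the spot running time; the cost is te hi - s (D F(p) hi - M(p)), and
   D F(p) hi - M(p) < F(p) hi - M(p) <= hi - mu since the price mass above p costs
   at most hi per unit.  Hence an optimal bid has F(p) = 1. *)

Definition grid_floor (a d x : R) : R := a + d * IZR (Int_part ((x - a) / d)).

Lemma grid_floor_bounds (a d x : R) : 0 < d -> 0 <= x - grid_floor a d x <= d.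
Proof.
  intro Hd. unfold grid_floor.
  destruct (base_Int_part ((x - a) / d)) as [Hle Hgt].
  set (r := (x - a) / d) in *; set (z := IZR (Int_part r)) in *.
  replace (x - (a + d * z)) with (d * (r - z)) by (unfold r; field; lra).
  split; [apply Rmult_le_pos|rewrite <- (Rmult_1_r d) at 2; apply Rmult_le_compat_l]; lra.
Qed.

Lemma grid_floor_cell (a d : R) (k : nat) (x : R) : 0 < d ->
  a + INR k * d < x < a + (INR k + 1) * d -> grid_floor a d x = a + INR k * d.
Proof.
  intros Hd Hx. unfold grid_floor.
  rewrite <- (Int_part_spec ((x - a) / d) (Z.of_nat k)), <- INR_IZR_INZ; [ring|].
  rewrite <- INR_IZR_INZ.
  assert (Hk : INR k * d < x - a < (INR k + 1) * d) by lra.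
  replace (x - a) with ((x - a) / d * d) in Hk by (field; lra).
  destruct Hk as [Hk1 Hk2].
  apply Rmult_lt_reg_r in Hk1; apply Rmult_lt_reg_r in Hk2; lra.
Qed.

Lemma ex_RInt_grid_floor_mult (F : R -> R) (a b d : R) (n : nat) : 0 < d ->
  a + INR n * d <= b -> ex_RInt F a b ->
  ex_RInt (fun x => grid_floor a d x * F x) a (a + INR n * d).
Proof.
  intros Hd Hn HF. induction n as [|n IH].
  - rewrite Rmult_0_l, Rplus_0_r. apply ex_RInt_point.
  - rewrite S_INR in *.
    assert (Hk : 0 <= INR n * d) by (apply Rmult_le_pos; [apply pos_INR|lra]).
    apply ex_RInt_Chasles with (a + INR n * d); [apply IH; lra|].
    assert (Hcell : ex_RInt F (a + INR n * d) (a + (INR n + 1) * d)).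
    { apply (@ex_RInt_Chasles_2 R_CompleteNormedModule _ a); [lra|].
      apply (@ex_RInt_Chasles_1 R_CompleteNormedModule _ _ _ b); [lra|exact HF]. }
    apply (ex_RInt_ext (fun x => scal (a + INR n * d) (F x)));
      [|exact (ex_RInt_scal _ _ _ _ Hcell)].
    intros x Hx. rewrite Rmin_left, Rmax_right in Hx by lra.
    now rewrite (grid_floor_cell a d n x).
Qed.

Lemma filterlim_uniform_bound (G : nat -> R -> R) (g : R -> R) (e : nat -> R) :
  (forall n x, Rabs (G n x - g x) <= e n) -> is_lim_seq e 0 ->
  filterlim G eventually (locally (g : fct_UniformSpace R R_UniformSpace)).
Proof.
  intros HG He. apply filterlim_locally. intro eps.
  apply is_lim_seq_spec in He.
  apply (filter_imp (fun n => Rabs (e n - 0) < eps)); [|exact (He eps)].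
  intros n Hn t. change (Rabs (G n t - g t) < eps).
  rewrite Rminus_0_r in Hn. pose proof (HG n t). pose proof (Rle_abs (e n)). lra.
Qed.

Lemma is_lim_seq_inv_succ (c : R) : is_lim_seq (fun n => c / INR (S n)) 0.
Proof.
  replace (Finite 0) with (Rbar_mult c 0) by (simpl; f_equal; ring).
  apply is_lim_seq_scal_l.
  apply (is_lim_seq_incr_1 (fun n => / INR n)).
  replace (Finite 0) with (Rbar_inv p_infty) by reflexivity.
  apply is_lim_seq_inv; [exact is_lim_seq_INR|discriminate].
Qed.

Lemma ex_RInt_id_mult_bounded (F : R -> R) (a b M : R) : a < b -> ex_RInt F a b ->
  (forall x, Rabs (F x) <= M) -> ex_RInt (fun x => x * F x) a b.
Proof.
  intros Hab HF HM.
  set (d := fun n : nat => (b - a) / INR (S n)).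
  assert (Hd : forall n, 0 < d n).
  { intro n. apply Rdiv_lt_0_compat; [lra|apply lt_0_INR; lia]. }
  set (G := fun n x => grid_floor a (d n) x * F x).
  assert (HG : forall n, ex_RInt (G n) a b).
  { intro n.
    assert (Hend : a + INR (S n) * d n = b)
      by (unfold d; field; apply not_0_INR; discriminate).
    rewrite <- Hend.
    apply (ex_RInt_grid_floor_mult F a b); [exact (Hd n)|right; exact Hend|exact HF]. }
  assert (Hunif : forall n x, Rabs (G n x - x * F x) <= M * (b - a) / INR (S n)).
  { intros n x. unfold G.
    replace (grid_floor a (d n) x * F x - x * F x)
      with (- ((x - grid_floor a (d n) x) * F x)) by ring.
    rewrite Rabs_Ropp, Rabs_mult.
    destruct (grid_floor_bounds a (d n) x (Hd n)).
    rewrite Rabs_right by lra.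
    replace (M * (b - a) / INR (S n)) with (d n * M)
      by (unfold d; field; apply not_0_INR; discriminate).
    pose proof (Rabs_pos (F x)). pose proof (HM x). nra. }
  destruct (filterlim_RInt G a b eventually _ (fun x => x * F x) (fun n => RInt (G n) a b))
    as [I [_ HI]].
  - intro n. exact (RInt_correct _ _ _ (HG n)).
  - exact (filterlim_uniform_bound G _ _ Hunif (is_lim_seq_inv_succ _)).
  - exists I. exact HI.
Qed.

Lemma ex_RInt_id_mult (F : R -> R) (a b : R) : a <= b -> ex_RInt F a b ->
  ex_RInt (fun x => x * F x) a b.
Proof.
  intros Hab HF. destruct (Rle_lt_or_eq_dec _ _ Hab) as [Hlt|<-]; [|apply ex_RInt_point].
  destruct (ex_RInt_ub F a b HF) as [M HM].
  rewrite Rmin_left, Rmax_right in HM by lra.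
  (* filterlim_RInt needs uniform convergence on all of R, so F is made
     globally bounded by clamping its argument to [a, b]. *)
  set (clamp := fun x => Rmax a (Rmin b x)).
  assert (Hclamp : forall x, a < x < b -> clamp x = x).
  { intros x Hx. unfold clamp. rewrite Rmin_right, Rmax_right; lra. }
  assert (HFc : ex_RInt (fun x => F (clamp x)) a b).
  { apply (ex_RInt_ext F); [|exact HF].
    intros x Hx. rewrite Rmin_left, Rmax_right in Hx by lra. now rewrite Hclamp. }
  apply (ex_RInt_ext (fun x => x * F (clamp x))).
  - intros x Hx. rewrite Rmin_left, Rmax_right in Hx by lra. now rewrite Hclamp.
  - apply (ex_RInt_id_mult_bounded _ a b M Hlt HFc).
    intro x. apply HM. unfold clamp. split; [apply Rmax_l|apply Rmax_lub; [lra|apply Rmin_l]].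
Qed.

Lemma RInt_id_mult_le_sup (g : R -> R) (a b : R) : a <= b -> ex_RInt g a b ->
  (forall x, a < x < b -> 0 <= g x) -> RInt (fun x => x * g x) a b <= b * RInt g a b.
Proof.
  intros Hab Hg Hpos.
  rewrite <- (RInt_scal g a b b Hg : RInt (fun x => b * g x) a b = b * RInt g a b).
  apply RInt_le.
  - exact Hab.
  - apply ex_RInt_id_mult; assumption.
  - exact (ex_RInt_scal g a b b Hg).
  - intros x Hx. apply Rmult_le_compat_r; [apply Hpos; exact Hx|lra].
Qed.

Lemma partial_mean_tail_le (g : R -> R) (a p b : R) : a <= p <= b -> ex_RInt g a b ->
  (forall x, p < x < b -> 0 <= g x) ->
  partial_mean g a b - partial_mean g a p <= b * (cdf g a b - cdf g a p).
Proof.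
  intros Hp Hg Hpos. unfold partial_mean, cdf.
  assert (Hsplit : forall h : R -> R, ex_RInt h a b -> RInt h a b - RInt h a p = RInt h p b).
  { intros h Hh.
    assert (E : RInt h a p + RInt h p b = RInt h a b)
      by exact (RInt_Chasles h a p b (ex_RInt_Chasles_1 h a p b Hp Hh)
                  (ex_RInt_Chasles_2 h a p b Hp Hh)).
    lra. }
  rewrite !Hsplit; [| exact Hg | apply ex_RInt_id_mult; [lra|exact Hg]].
  apply RInt_id_mult_le_sup; [lra| |exact Hpos].
  exact (ex_RInt_Chasles_2 g a p b Hp Hg).
Qed.

Section BidAtSupremum.

Variables (f : R -> R) (lo hi tk te ts tr : R).
Hypotheses (Hlo : 0 <= lo) (Hlohi : lo < hi)
  (Hf_nonneg : forall x, lo <= x <= hi -> 0 <= f x)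
  (Hf_int : ex_RInt f lo hi) (Hf_total : cdf f lo hi = 1)
  (Htk : 0 < tk) (Hte : 0 < te) (Htr : 0 < tr) (Hts1 : te / 2 < ts) (Hts2 : ts < te).

Lemma feasible3_bid_sup : feasible3 f lo hi tk te ts tr (1 - ts / te) hi.
Proof.
  unfold feasible3. rewrite Hf_total.
  assert (Hq : (1 - ts / te) * te = te - ts) by (field; lra).
  assert (Hspot : (1 - (1 - ts / te)) * te / (1 - tr / tk * (1 - 1)) * (1 / 1) = ts)
    by (field; lra).
  assert (Hratio : 0 < ts / te < 1).
  { split; [apply Rdiv_lt_0_compat|apply Rlt_div_l]; lra. }
  rewrite Hq, Hspot. repeat split; lra.
Qed.

Lemma Phi3_bid_sup :
  Phi3 f lo hi tk te tr hi (1 - ts / te) = te * hi - ts * (hi - partial_mean f lo hi).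
Proof. unfold Phi3. rewrite Hf_total. field. lra. Qed.

Lemma Phi3_bid_sup_lt (q p : R) : feasible3 f lo hi tk te ts tr q p -> cdf f lo p < 1 ->
  Phi3 f lo hi tk te tr hi (1 - ts / te) < Phi3 f lo hi tk te tr p q.
Proof.
  intros [Hq [Hp [Hq01 [HF0 [Hspot Hrec]]]]] HF1.
  rewrite Phi3_bid_sup. unfold Phi3.
  set (F := cdf f lo p) in *; set (M := partial_mean f lo p).
  set (mu := partial_mean f lo hi).
  set (D := 1 - tr / tk * (1 - F)) in *.
  assert (HD : 0 < D < 1).
  { assert (E : tr / tk * (1 - F) = tr * (1 - F) / tk) by (field; lra).
    unfold D. rewrite E.
    assert (0 < tr * (1 - F) / tk < 1)
      by (split; [apply Rdiv_lt_0_compat|apply Rlt_div_l]; nra).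
    lra. }
  set (s := (1 - q) * te / (D * F)).
  assert (Hs : 0 < s <= ts).
  { split.
    - apply Rdiv_lt_0_compat; nra.
    - replace s with ((1 - q) * te / D * (1 / F)) by (unfold s; field; lra). exact Hspot. }
  assert (HPhi : q * te * hi + (1 - q) * te / D * (M / F)
                 = te * hi - s * (D * F * hi - M)) by (unfold s; field; lra).
  assert (Htail : mu - M <= hi * (1 - F)).
  { rewrite <- Hf_total. apply partial_mean_tail_le; [lra|exact Hf_int|].
    intros x Hx. apply Hf_nonneg. lra. }
  assert (Hmean : mu <= hi).
  { pose proof (RInt_id_mult_le_sup f lo hi) as Hle.
    unfold cdf in Hf_total. rewrite Hf_total, Rmult_1_r in Hle.
    apply Hle; [lra|exact Hf_int|intros x Hx; apply Hf_nonneg; lra]. }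
  assert (Hgain : D * F * hi - M < hi - mu).
  { assert (0 < (1 - D) * F * hi) by (apply Rmult_lt_0_compat; [apply Rmult_lt_0_compat|]; lra).
    lra. }
  rewrite HPhi. nra.
Qed.

Lemma optimal3_cdf_ge_1 (q p : R) : optimal3 f lo hi tk te ts tr q p -> 1 <= cdf f lo p.
Proof.
  intros [Hfeas Hmin]. apply Rnot_lt_le. intro HF.
  pose proof (Hmin _ _ feasible3_bid_sup) as Hle.
  pose proof (Phi3_bid_sup_lt q p Hfeas HF) as Hlt.
  lra.
Qed.

End BidAtSupremum.

Theorem claim2 (f : R -> R) (lo hi tk te ts tr : R)
  (Hlo : 0 <= lo) (Hlohi : lo < hi)
  (Hf_nonneg : forall x, lo <= x <= hi -> 0 <= f x)
  (Hf_decr : forall x y, lo <= x -> x <= y -> y <= hi -> f y <= f x)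
  (Hf_int : ex_RInt f lo hi)
  (Hf_total : RInt f lo hi = 1)
  (Htk : 0 < tk) (Hte : 0 < te) (Hts : 0 < ts) (Htr : 0 < tr)
  (Hts1 : te / 2 < ts) (Hts2 : ts < te)
  (qs ps : R)
  (Hopt : optimal3 f lo hi tk te ts tr qs ps) :
  cdf f lo ps >= 1 / 2.
Proof.
  pose proof (optimal3_cdf_ge_1 f lo hi tk te ts tr Hlo Hlohi Hf_nonneg Hf_int Hf_total
                Htk Hte Htr Hts1 Hts2 qs ps Hopt).
  lra.
Qed.
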